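(* Let $A$ be a nontrivial closed class of decision tables from $\mathcal M_2^\infty$ and $\psi$ a bounded complexity measure. If the function $G_{\psi,A}$ is not everywhere defined, then the function $\mathcal H^\infty_{\psi,A}$ is not everywhere defined.
   Context: Notation: $\omega=\{0,1,2,\dots\}$; $\mathcal P(\omega)$ is the set of nonempty finite subsets of $\omega$; $E_2=\{0,1\}$. $P=\{f_i:i\in\omega\}$ is a set of attributes, $f_i\neq f_j$ for $i\ne j$. Decision tables: $\mathcal M_2^\infty$ is the set of rectangular tables filled with numbers from $E_2$, whose columns are labeled with pairwise different attributes from $P$, whose rows are pairwise different, and each row of which is labeled with a set from $\mathcal P(\omega)$ (its set of decisions). The empty table (no rows) is denoted $\Lambda$ and belongs to $\mathcal M_2^\infty$. For $T\in\mathcal M_2^\infty$: $\Pi(T)$ is the intersection of the decision sets of all rows (common decisions); $\mathrm{At}(T)$ is the set of attributes labeling columns. For nonempty $T$, $\Omega_2(T)$ is the set of finite words (including the empty word $\lambda$) over the alphabet $\{(f_i,\delta):f_i\in\mathrm{At}(T),\delta\in E_2\}$; for $\alpha=(f_{i_1},\delta_1)\cdots(f_{i_m},\delta_m)$, $T\alpha$ is the subtable of $T$ consisting of the rows having value $\delta_j$ in the column $f_{i_j}$ for all $j$, and $T\lambda=T$. Operations: for $D\subseteq\mathrm{At}(T)$, $I(D,T)$ is obtained from $T$ by deleting the columns labeled with attributes from $D$ and, in each group of rows coinciding on the remaining columns, keeping only the first row; $I(\mathrm{At}(T),T)=\Lambda$. For $\nu:E_2^{|\mathrm{At}(T)|}\to\mathcal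 P(\omega)$, $J(\nu,T)$ is obtained by replacing the decision set of each row $\bar\delta$ by $\nu(\bar\delta)$. $[T]=\{J(\nu,I(D,T)):D\subseteq\mathrm{At}(T),\ \nu:E_2^{|\mathrm{At}(T)\setminus D|}\to\mathcal P(\omega)\}$; for nonempty $A\subseteq\mathcal M_2^\infty$, $[A]=\bigcup_{T\in A}[T]$. $A$ is a closed class if $[A]=A$; nontrivial if it contains a nonempty table. Decision trees: a $2$-decision tree is a finite directed rooted tree with at least two nodes in which the root and the edges leaving the root are unlabeled, each terminal node is labeled with a decision from $\omega$, and each other node is labeled with an attribute from $P$, each edge leaving such a node being labeled with a number from $E_2$. $\mathrm{At}(\Gamma)$ is the set of attributes labeling nodes of $\Gamma$. For a complete path $\tau=v_1,d_1,\dots,v_m,d_m,v_{m+1}$ (from the root to a terminal node), $\pi(\tau)=\lambda$ if $m=1$, and otherwise $\pi(\tau)=(f_{i_2},\delta_2)\cdots(f_{i_m},\delta_m)$ where $v_j$ is labeled $f_{i_j}$ and $d_j$ is labeled $\delta_j$; $T(\tau)=T\pi(\tau)$. For $T\ne\Lambda$, a nondeterministic decision tree for $T$ is a $2$-decision tree $\Gamma$ with $\mathrm{At}(\Gamma)\subseteq\mathrm{At}(T)$ such that every row of $T$ belongs to $T(\tau)$ for some complete path $\tau$, and for every complete path $\tau$ either $T(\tau)=\Lambda$ or the decision at the terminal node of $\tau$ belongs to $\Pi(T(\tau))$. A deterministic decision tree for $T$ is a nondeterministic decision tree for $T$ in which, additionally, exactly one edge leaves the root and the edges leaving any node that is neither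 the root nor terminal are labeled with pairwise different numbers. Complexity measures: a partially bounded complexity measure is a function $\psi:P^*\to\omega$ on finite words over $P$ such that for all words $\alpha_1,\alpha_2$: $\psi(\alpha_1)=0$ iff $\alpha_1=\lambda$; $\psi(\alpha_1)$ is invariant under permutation of letters; $\psi(\alpha_1)\le\psi(\alpha_1\alpha_2)$; $\psi(\alpha_1\alpha_2)\le\psi(\alpha_1)+\psi(\alpha_2)$. It is bounded if in addition $\psi(\alpha)\ge|\alpha|$ for all $\alpha$. $\psi$ is extended to words $(f_{i_1},\delta_1)\cdots(f_{i_m},\delta_m)$ by $\psi(f_{i_1}\cdots f_{i_m})$ ($\psi(\lambda)=0$). For a $2$-decision tree $\Gamma$, $\psi(\Gamma)=\max_\tau\psi(\pi(\tau))$ over complete paths. For $T\ne\Lambda$, $\psi^d(T)$ (resp. $\psi^a(T)$) is the minimum of $\psi(\Gamma)$ over deterministic (resp. nondeterministic) decision trees $\Gamma$ for $T$; $\psi^d(\Lambda)=\psi^a(\Lambda)=0$. Parameters: $m_\psi(T)=\max\{\psi(f_i):f_i\in\mathrm{At}(T)\}$, $m_\psi(\Lambda)=0$. A word $\alpha\in\Omega_2(T)$ is annihilating for $T$ if $T\alpha=\Lambda$ and $\alpha$ contains no two letters $(f_i,\delta),(f_i,\sigma)$ with $\delta\ne\sigma$; it is irreducible if no word obtained from $\alpha$ by deleting some (at least one) letters is annihilating for $T$; $G(T)$ is the maximum length of an irreducible annihilating word for $T$ if one exists, and $0$ otherwise; $G(\Lambda)=0$. For $n\in\omega$: $A_\psi(n)=\{T\in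 A:m_\psi(T)\le n\}$; $G_{\psi,A}(n)$ is undefined if $\{G(T):T\in A_\psi(n)\}$ is infinite, else its maximum; $\mathcal H^\infty_{\psi,A}(n)$ is undefined if $\{\psi^d(T):T\in A,\psi^a(T)\le n\}$ is infinite, else its maximum. *)

From mathcomp Require Import all_boot.
From mathcomp Require Import boolp classical_sets cardinality.

Set Implicit Arguments.
Unset Strict Implicit.
Unset Printing Implicit Defensive.

(* Classical "least element" of a set of naturals (0 if the set is empty). *)
Definition nat_min (P : nat -> Prop) : nat :=
  match pselect (exists n, P n) with
  | left h =>
      @ex_minn (fun n => `[< P n >])
        (let: ex_intro n pn := h in ex_intro _ n (asboolT pn))
  | right _ => 0
  end.

(* Attributes f_i are represented by their index i : nat.
   A decision set (element of P(omega)) is represented canonically by the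
   strictly increasing nonempty list of its elements. *)
Definition valid_dec (d : seq nat) : bool := sorted ltn d && ~~ nilp d.

(* A table: list of column attributes (in order) and list of rows (in order);
   a row is its vector of values from E_2 = bool together with its decision set. *)
Record table := Table { cols : seq nat; rows : seq (seq bool * seq nat) }.

Definition Lambda : table := Table [::] [::].

(* Membership in M_2^infty: pairwise different attributes, rectangular,
   pairwise different rows, valid decision sets; all tables without rows are
   identified with Lambda. *)
Definition wf_table (T : table) : bool :=
  [&& uniq (cols T),
      all (fun r => size r.1 == size (cols T)) (rows T),
      uniq (map fst (rows T)),
      all (fun r => valid_dec r.2) (rows T)
    & nilp (rows T) ==> nilp (cols T)].

Definition proj_row (D cs : seq nat) (v : seq bool) : seq bool :=
  [seq p.2 | p <- zip cs v & p.1 \notin D].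

Fixpoint first_rows (seen : seq (seq bool)) (s : seq (seq bool * seq nat))
  : seq (seq bool * seq nat) :=
  match s with
  | [::] => [::]
  | r :: s' => if r.1 \in seen then first_rows seen s'
               else r :: first_rows (r.1 :: seen) s'
  end.

Definition Iop (D : seq nat) (T : table) : table :=
  if all (fun c => c \in D) (cols T) then Lambda
  else Table [seq c <- cols T | c \notin D]
             (first_rows [::] [seq (proj_row D (cols T) r.1, r.2) | r <- rows T]).

Definition Jop (nu : seq bool -> seq nat) (T : table) : table :=
  Table (cols T) [seq (r.1, nu r.1) | r <- rows T].

Definition in_bracket (T T' : table) : Prop :=
  exists D : seq nat, {subset D <= cols T} /\
  exists nu : seq bool -> seq nat, (forall v, valid_dec (nu v)) /\
    T' = Jop nu (Iop D T).

Definition closed_class (A : table -> Prop) : Prop :=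
  (forall T, A T -> wf_table T) /\
  (forall T', A T' <-> exists T, A T /\ in_bracket T T').

Definition nontrivial (A : table -> Prop) : Prop :=
  exists T, A T /\ ~~ nilp (rows T).

Definition row_sat (cs : seq nat) (v : seq bool) (w : seq (nat * bool)) : bool :=
  all (fun p => nth false v (index p.1 cs) == p.2) w.

Definition subrows (T : table) (w : seq (nat * bool)) :=
  [seq r <- rows T | row_sat (cols T) r.1 w].

(* A non-root node: terminal node labeled with a decision, or a node labeled
   with an attribute together with its outgoing edges (edge label, child). *)
Inductive dnode := Leaf of nat | Node of nat & seq (bool * dnode).

(* A 2-decision tree: an unlabeled root and the children of the root. *)
Definition dtree := seq dnode.

Fixpoint node_wf (n : dnode) : bool :=
  match n with
  | Leaf _ => true
  | Node _ ch => (0 < size ch) && all (fun bc => node_wf bc.2) ch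
  end.

Definition tree_wf (G : dtree) : bool := (0 < size G) && all node_wf G.

Fixpoint node_det (n : dnode) : bool :=
  match n with
  | Leaf _ => true
  | Node _ ch => uniq (map fst ch) && all (fun bc => node_det bc.2) ch
  end.

Definition tree_det (G : dtree) : bool := (size G == 1) && all node_det G.

Fixpoint node_attrs (n : dnode) : seq nat :=
  match n with
  | Leaf _ => [::]
  | Node f ch => f :: flatten (map (fun bc => node_attrs bc.2) ch)
  end.

Definition tree_attrs (G : dtree) : seq nat := flatten (map node_attrs G).

(* complete paths: (pi(tau), decision at the terminal node) *)
Fixpoint node_paths (n : dnode) : seq (seq (nat * bool) * nat) :=
  match n with
  | Leaf d => [:: ([::], d)]
  | Node f ch =>
      flatten (map (fun bc => [seq ((f, bc.1) :: p.1, p.2) | p <- node_paths bc.2]) ch)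
  end.

Definition tree_paths (G : dtree) := flatten (map node_paths G).

Definition nd_tree_for (T : table) (G : dtree) : bool :=
  [&& tree_wf G,
      all (fun f => f \in cols T) (tree_attrs G),
      all (fun r => has (fun p => row_sat (cols T) r.1 p.1) (tree_paths G)) (rows T)
    & all (fun p => nilp (subrows T p.1) || all (fun r => p.2 \in r.2) (subrows T p.1))
          (tree_paths G)].

Definition det_tree_for (T : table) (G : dtree) : bool :=
  nd_tree_for T G && tree_det G.

Definition complexity_measure (psi : seq nat -> nat) : Prop :=
  [/\ forall a, psi a = 0 <-> a = [::],
      forall a b, perm_eq a b -> psi a = psi b,
      forall a b, psi a <= psi (a ++ b)
    & forall a b, psi (a ++ b) <= psi a + psi b].

Definition bounded_measure (psi : seq nat -> nat) : Prop :=
  complexity_measure psi /\ forall a, size a <= psi a.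

Definition tree_cost (psi : seq nat -> nat) (G : dtree) : nat :=
  \max_(p <- tree_paths G) psi (map fst p.1).

Definition psi_d (psi : seq nat -> nat) (T : table) : nat :=
  if nilp (rows T) then 0
  else nat_min (fun k => exists G, det_tree_for T G /\ tree_cost psi G = k).

Definition psi_a (psi : seq nat -> nat) (T : table) : nat :=
  if nilp (rows T) then 0
  else nat_min (fun k => exists G, nd_tree_for T G /\ tree_cost psi G = k).

Definition m_psi (psi : seq nat -> nat) (T : table) : nat :=
  \max_(f <- cols T) psi [:: f].

Definition consistent_word (a : seq (nat * bool)) : bool :=
  all (fun p => all (fun q => (p.1 == q.1) ==> (p.2 == q.2)) a) a.

Definition annihilating (T : table) (a : seq (nat * bool)) : bool :=
  [&& all (fun p => p.1 \in cols T) a, nilp (subrows T a) & consistent_word a].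

Definition irreducible (T : table) (a : seq (nat * bool)) : Prop :=
  forall b, subseq b a -> size b < size a -> ~~ annihilating T b.

(* G(T): maximum length of an irreducible annihilating word (0 if none);
   written as the least upper bound of these lengths (they are bounded). *)
Definition Gpar (T : table) : nat :=
  if nilp (rows T) then 0
  else nat_min (fun k => forall a, annihilating T a -> irreducible T a -> size a <= k).

Definition G_undef (psi : seq nat -> nat) (A : table -> Prop) (n : nat) : Prop :=
  infinite_set [set k | exists T, A T /\ m_psi psi T <= n /\ Gpar T = k].

Definition H_undef (psi : seq nat -> nat) (A : table -> Prop) (n : nat) : Prop :=
  infinite_set [set k | exists T, A T /\ psi_a psi T <= n /\ psi_d psi T = k].

From mathcomp Require Import all_boot.
From mathcomp Require Import boolp classical_sets cardinality.
From mathcomp Require Import zify.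

Set Implicit Arguments.
Unset Strict Implicit.
Unset Printing Implicit Defensive.

(* From tables of A with m_psi <= n and arbitrarily large G, pick an irreducible
   annihilating word al, read as a partial assignment av of its attributes.
   Deleting the other columns and labelling every row by the set of columns
   where it deviates from av gives a table T1 in [T], hence in A. Each row
   deviates somewhere, and by irreducibility every column j carries a "spike"
   row that deviates from av only at j and so has decision set {j}. Guessing a
   deviating column and checking it is a nondeterministic tree with one query
   per path, so psi_a T1 <= m_psi T <= n; but a deterministic tree queried
   along av cannot separate two spike rows before all but one column has been
   queried, so psi_d T1 >= |al| - 1. *)

Lemma infinite_natP (S : set nat) :
  infinite_set S <-> forall K, exists k, S k /\ K <= k.
Proof.
split=> [infS K | unbS /finite_seqP [s defS]].
  apply: contrapT => bndS; apply: infS; apply: (@sub_finite_set _ _ `I_K) => // k Sk /=.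
  by rewrite ltnNge; apply/negP => Kk; apply: bndS; exists k.
have [k [Sk ltk]] := unbS (\max_(i <- s) i).+1.
have ks : k \in s by move: Sk; rewrite defS.
by move: ltk; rewrite ltnNge (leq_bigmax_seq (F := id)).
Qed.

Lemma nat_minP (P : nat -> Prop) : (exists k, P k) ->
  P (nat_min P) /\ forall k, P k -> nat_min P <= k.
Proof.
rewrite /nat_min; case: pselect => // h _.
by case: ex_minnP => m /asboolP Pm minm; split => // k Pk; apply: minm; apply/asboolP.
Qed.

Lemma nat_min_le (P : nat -> Prop) k : P k -> nat_min P <= k.
Proof. by move=> Pk; have [_] := nat_minP (ex_intro _ k Pk); apply. Qed.

(* [dnode] is a nested inductive, whose generated induction principle gives no
   hypothesis for the children of a node. *)
Fixpoint dnode_nested_ind (P : dnode -> Prop) (HL : forall d, P (Leaf d))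
    (HN : forall f ch, (forall b c, List.In (b, c) ch -> P c) -> P (Node f ch))
    (n : dnode) {struct n} : P n :=
  match n with
  | Leaf d => HL d
  | Node f ch => HN f ch
      ((fix go (s : seq (bool * dnode)) : forall b c, List.In (b, c) s -> P c :=
          match s with
          | [::] => fun b c F => match F with end
          | (b', c') :: s' => fun b c H =>
              match H with
              | or_introl E => eq_ind c' P (dnode_nested_ind HL HN c') c (f_equal snd E)
              | or_intror H' => go s' b c H'
              end
          end) ch)
  end.

Lemma In_all (T : Type) (p : pred T) s x : all p s -> List.In x s -> p x.
Proof. by elim: s => //= y s IHs /andP [py ps] [<- // | xs]; apply: IHs. Qed.

Lemma In_map_fst (ch : seq (bool * dnode)) b c : List.In (b, c) ch -> b \in map fst ch.
Proof. by elim: ch => //= x s IHs [->|/IHs]; rewrite inE ?eqxx // => ->; rewrite orbT. Qed.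

Lemma uniq_fst_In (ch : seq (bool * dnode)) b c1 c2 : uniq (map fst ch) ->
  List.In (b, c1) ch -> List.In (b, c2) ch -> c1 = c2.
Proof.
elim: ch => //= x s IHs /andP [xs us] [E1|H1] [E2|H2].
- by rewrite E1 in E2; case: E2.
- by move: xs; rewrite E1 /= (In_map_fst H2).
- by move: xs; rewrite E2 /= (In_map_fst H1).
- exact: IHs.
Qed.

Lemma mem_node_paths f ch p :
  p \in node_paths (Node f ch) <->
  exists b c q, [/\ List.In (b, c) ch, q \in node_paths c & p = ((f, b) :: q.1, q.2)].
Proof.
rewrite /=; elim: ch => [|[b c] ch IHch] /=; first by split => // [[? [? [? []]]]].
rewrite mem_cat; split.
  case/orP => [/mapP [q qc ->]|/IHch [b' [c' [q [bc' qc ->]]]]].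
    by exists b, c, q; split; [left|..].
  by exists b', c', q; split; [right|..].
case=> b' [c' [q [[[-> ->]|bc'] qc Ep]]].
  by apply/orP; left; apply/mapP; exists q.
by apply/orP; right; apply/IHch; exists b', c', q.
Qed.

Lemma node_paths_nonempty n : node_wf n -> exists p, p \in node_paths n.
Proof.
elim/dnode_nested_ind: n => [d|f [|[b c] ch] IHch] //=; first by exists ([::], d); rewrite inE.
case/andP=> wfc _; have [q qc] := IHch b c (or_introl erefl) wfc.
exists ((f, b) :: q.1, q.2); rewrite mem_cat; apply/orP; left; apply/mapP; by exists q.
Qed.

Lemma all_flatten (T : Type) (p : pred T) (ss : seq (seq T)) :
  all p (flatten ss) = all (all p) ss.
Proof. by elim: ss => //= s ss IHss; rewrite all_cat IHss. Qed.

Lemma row_sat_cat cs v w1 w2 : row_sat cs v (w1 ++ w2) = row_sat cs v w1 && row_sat cs v w2.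
Proof. by rewrite /row_sat all_cat. Qed.

Lemma row_sat1 cs v a b : row_sat cs v [:: (a, b)] = (nth false v (index a cs) == b).
Proof. by rewrite /row_sat /= andbT. Qed.

Definition covers (T : table) (w : seq (nat * bool)) (n : dnode) : Prop :=
  forall r, r \in rows T -> row_sat (cols T) r.1 w ->
    has (fun p => row_sat (cols T) r.1 (w ++ p.1)) (node_paths n).

Definition decides (T : table) (w : seq (nat * bool)) (n : dnode) : Prop :=
  forall p, p \in node_paths n ->
    nilp (subrows T (w ++ p.1)) || all (fun r => p.2 \in r.2) (subrows T (w ++ p.1)).

Lemma covers_child T w f ch b c : uniq (map fst ch) -> List.In (b, c) ch ->
  covers T w (Node f ch) -> covers T (w ++ [:: (f, b)]) c.
Proof.
move=> uch bc covn r rT; rewrite row_sat_cat row_sat1 => /andP [rw /eqP rf].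
have /hasP [p /mem_node_paths [b' [c' [q [bc' qc ->]]]]] := covn r rT rw.
rewrite row_sat_cat /= => /andP [_ /andP [/eqP rb' rq]].
move: bc'; rewrite -rb' rf => bc'; rewrite (uniq_fst_In uch bc bc').
by apply/hasP; exists q; rewrite // -catA row_sat_cat /= rw rf eqxx.
Qed.

Lemma decides_child T w f ch b c : List.In (b, c) ch ->
  decides T w (Node f ch) -> decides T (w ++ [:: (f, b)]) c.
Proof.
move=> bc decn q qc; rewrite -catA; apply: (decn ((f, b) :: q.1, q.2)).
by apply/mem_node_paths; exists b, c, q.
Qed.

Lemma det_tree_for_single T n : det_tree_for T [:: n] <->
  [/\ node_wf n, node_det n, all (fun f => f \in cols T) (node_attrs n),
      covers T [::] n & decides T [::] n].
Proof.
rewrite /det_tree_for /nd_tree_for /tree_det /tree_wf /tree_attrs /tree_paths /= !cats0 !andbT.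
split=> [/andP [/and4P [wfn atn /allP covn /allP decn] detn]|[-> -> atn covn decn]].
  by split=> // r rT _; apply: covn.
by rewrite andbT; apply/and4P; split=> //; apply/allP => x xin; [exact: covn | exact: decn].
Qed.

Lemma eq_negb (x y : bool) : (x == ~~ y) = (x != y).
Proof. by case: x; case: y. Qed.

Lemma exists_notin_neq (Q C : seq nat) x : uniq C -> count (mem Q) C + 2 <= size C ->
  exists j, [/\ j \in C, j \notin Q & j != x].
Proof.
move=> uC szC; pose F := [seq j <- C | j \notin Q].
have szF : 1 < size F.
  rewrite size_filter; move: szC; rewrite -(count_predC (mem Q) C).
  change (count (predC (mem Q)) C) with (count (fun j => j \notin Q) C); lia.
apply: contrapT => noj; suff : size F <= size [:: x] by rewrite /= leqNgt szF.
apply: uniq_leq_size; first exact: filter_uniq.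
move=> j; rewrite mem_filter inE => /andP [jQ jC].
by apply: contrapT => /negP jx; apply: noj; exists j.
Qed.

Section SpikeTable.
Variables (C : seq nat) (R : seq (seq bool * seq nat)) (av : nat -> bool).
Local Notation T1 := (Table C R).
Local Notation value v a := (nth false v (index a C)).

Hypothesis row_deviates : forall r, r \in R -> exists2 a, a \in C & value r.1 a != av a.
Hypothesis deviation_decides :
  forall r a, r \in R -> a \in C -> value r.1 a != av a -> a \in r.2.

Definition star_tree : dtree := [seq Node a [:: (~~ av a, Leaf a)] | a <- C].

Lemma star_tree_paths : tree_paths star_tree = [seq ([:: (a, ~~ av a)], a) | a <- C].
Proof. by rewrite /tree_paths /star_tree; elim: C => //= a s ->. Qed.

Lemma star_tree_for : 0 < size C -> nd_tree_for T1 star_tree.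
Proof.
move=> C0; apply/and4P; split.
- by rewrite /tree_wf /star_tree size_map C0 /=; elim: (C) => //= a s ->.
- have -> : tree_attrs star_tree = C by rewrite /tree_attrs /star_tree; elim: (C) => //= a s ->.
  exact/allP.
- apply/allP => r rR; rewrite star_tree_paths; have [a aC dev_a] := row_deviates rR.
  apply/hasP; exists ([:: (a, ~~ av a)], a); first exact: map_f.
  by rewrite /row_sat /= andbT eq_negb.
- rewrite star_tree_paths; apply/allP => _ /mapP [a aC ->] /=; apply/orP; right.
  apply/allP => r; rewrite mem_filter /row_sat /= andbT eq_negb => /andP [dev_a rR].
  exact: deviation_decides.
Qed.

Lemma psi_a_spike_le psi : psi_a psi T1 <= \max_(a <- C) psi [:: a].
Proof.
rewrite /psi_a /=; case: ifPn => // R0.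
have [r rR] : exists r, r \in R by move: R0; case: (R) => // r ? _; exists r; rewrite mem_head.
have C0 : 0 < size C by have [a aC _] := row_deviates rR; case: (C) aC.
apply: leq_trans (nat_min_le (k := tree_cost psi star_tree) _) _.
  by exists star_tree; split=> //; apply: star_tree_for.
by rewrite /tree_cost star_tree_paths big_map.
Qed.

(* Only used to show that T1 has some deterministic tree, so that [psi_d] is a
   true minimum. *)
Fixpoint chain_node (s : seq nat) : dnode :=
  if s is a :: s' then Node a [:: (~~ av a, Leaf a); (av a, chain_node s')] else Leaf 0.

Lemma chain_node_attrs s : node_attrs (chain_node s) = s.
Proof. by elim: s => //= a s ->; rewrite cats0. Qed.

Lemma chain_node_paths s p : p \in node_paths (chain_node s) ->
  (exists a, [/\ a \in s, (a, ~~ av a) \in p.1 & p.2 = a]) \/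
  (p.2 = 0 /\ forall a, a \in s -> (a, av a) \in p.1).
Proof.
elim: s p => [|a s IHs] p; first by rewrite inE => /eqP ->; right.
case/mem_node_paths => b [c [q [[[<- <-]|[[<- <-]|//]] qc ->]]] /=.
  by left; exists a; move: qc; rewrite !inE => /eqP ->; rewrite !eqxx.
case: (IHs q qc) => [[a' [a's a'q ->]]|[-> allq]].
  by left; exists a'; rewrite !inE a's a'q !orbT.
by right; split=> // a'; rewrite !inE => /orP [/eqP ->|/allq ->]; rewrite ?eqxx ?orbT.
Qed.

Lemma chain_node_covers s v : (exists2 a, a \in s & value v a != av a) ->
  has (fun p => row_sat C v p.1) (node_paths (chain_node s)).
Proof.
elim: s => [[? //]|a s IHs] [a0 a0s dev0] /=; rewrite cats0 andbT eq_negb.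
have [agree_a|//] := eqVneq (value v a) (av a) => /=.
have a0s' : a0 \in s.
  by move: a0s; rewrite inE => /predU1P [Ea|//]; move: dev0; rewrite Ea agree_a eqxx.
have /hasP [q qc sq] := IHs (ex_intro2 _ _ a0 a0s' dev0).
by apply/hasP; exists ((a, av a) :: q.1, q.2); [apply: map_f | rewrite /row_sat /= agree_a eqxx].
Qed.

Lemma det_tree_chain : det_tree_for T1 [:: chain_node C].
Proof.
apply/det_tree_for_single; split.
- by elim: (C) => //= a s ->.
- by elim: (C) => //= a s ->; case: (av a).
- by rewrite chain_node_attrs; apply/allP.
- by move=> r rR _; apply: chain_node_covers; apply: row_deviates.
move=> p /chain_node_paths [[a [aC ap ->]]|[_ allp]]; apply/orP; [right|left].
  apply/allP => r; rewrite mem_filter => /andP [sat_r rR].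
  by apply: deviation_decides => //; have := allP sat_r _ ap; rewrite /= eq_negb.
case E: (subrows T1 p.1) => [//|r rs].
have : r \in subrows T1 p.1 by rewrite E mem_head.
rewrite mem_filter => /andP [sat_r rR]; have [a aC dev_a] := row_deviates rR.
by have := allP sat_r _ (allp a aC); rewrite /= (negbTE dev_a).
Qed.

Hypothesis uniq_C : uniq C.
Hypothesis spike_rows : forall j, j \in C -> exists2 r, r \in R &
  (forall b, b \in C -> b != j -> value r.1 b = av b) /\ (forall d, d \in r.2 -> d = j).

Let agrees (w : seq (nat * bool)) := all (fun p => (p.1 \in C) && (p.2 == av p.1)) w.
Let asked (w : seq (nat * bool)) := count (mem (map fst w)) C.

Lemma asked_cat w q : asked w <= asked (w ++ q).
Proof. by apply: sub_count => j /=; rewrite map_cat mem_cat => ->. Qed.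

Lemma spike_row_sat j (r : seq bool * seq nat) w :
  (forall b, b \in C -> b != j -> value r.1 b = av b) ->
  agrees w -> j \notin map fst w -> row_sat C r.1 w.
Proof.
move=> agree_r agw jw; apply/allP => p pw; have /andP [pC /eqP ->] := allP agw p pw.
by rewrite agree_r //; apply: contraNneq jw => <-; apply: (map_f fst pw).
Qed.

Lemma subrows_miss_decision w d : agrees w -> asked w + 2 <= size C ->
  exists2 r, r \in subrows T1 w & d \notin r.2.
Proof.
move=> agw many; have [j [jC jw jd]] := exists_notin_neq d uniq_C many.
have [r rR [agree_r dec_r]] := spike_rows jC.
exists r; first by rewrite mem_filter rR (spike_row_sat agree_r).
by apply: contra jd => /dec_r ->.
Qed.

Lemma adversary_path_few n w : node_wf n -> size C < asked w + 2 ->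
  exists2 p, p \in node_paths n & size C <= (asked (w ++ p.1)).+1.
Proof.
move=> wfn few; have [p pn] := node_paths_nonempty wfn; exists p => //.
by have := asked_cat w p.1; lia.
Qed.

(* Answering every query [f] by [av f] keeps the spike row of each unasked column
   consistent with the path, so a correct leaf is only reached once at most one
   column of C is unasked. *)
Lemma adversary_path n w : node_wf n -> node_det n -> all (fun f => f \in C) (node_attrs n) ->
  agrees w -> covers T1 w n -> decides T1 w n ->
  exists2 p, p \in node_paths n & size C <= (asked (w ++ p.1)).+1.
Proof.
elim/dnode_nested_ind: n w => [d|f ch IHch] w wfn detn atn agw covn decn;
  (have [many|few] := leqP (asked w + 2) (size C); last exact: adversary_path_few).
  have [r rw dr] := subrows_miss_decision d agw many.
  have := decn ([::], d) (mem_head _ _); rewrite cats0 => /orP [/nilP w0|/allP dec_w].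
    by move: rw; rewrite w0.
  by move: dr; rewrite dec_w.
move: wfn detn atn => /= /andP [_ wfch] /andP [uch detch] /andP [fC].
rewrite all_flatten all_map => atch.
have [j [jC jw jf]] := exists_notin_neq f uniq_C many.
have [r rR [agree_r _]] := spike_rows jC.
have /hasP [_ /mem_node_paths [b [c [q [bc _ ->]]]]] := covn r rR (spike_row_sat agree_r agw jw).
rewrite row_sat_cat /= => /andP [_ /andP [/eqP rb _]].
move: bc; rewrite -rb agree_r 1?eq_sym // => bc.
have agw' : agrees (w ++ [:: (f, av f)]) by move: agw; rewrite /agrees all_cat /= fC eqxx => ->.
have [p pc lep] := IHch _ _ bc _ (In_all wfch bc) (In_all detch bc) (In_all atch bc) agw'
  (covers_child uch bc covn) (decides_child bc decn).
exists ((f, av f) :: p.1, p.2); first by apply/mem_node_paths; exists (av f), c, p.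
by rewrite -catA in lep.
Qed.

Lemma asked_le_size w : asked w <= size w.
Proof.
rewrite /asked -size_filter -(size_map fst w); apply: uniq_leq_size; first exact: filter_uniq.
by move=> j; rewrite mem_filter => /andP [].
Qed.

Lemma psi_d_spike_ge psi : (forall a, size a <= psi a) -> (size C).-1 <= psi_d psi T1.
Proof.
move=> psi_size; rewrite /psi_d /=; case: ifPn => [/nilP R0 | _].
  by case: (C) (spike_rows) => // j C' /(_ j (mem_head _ _)) [r]; rewrite R0.
have some_tree : exists k G, det_tree_for T1 G /\ tree_cost psi G = k.
  by exists (tree_cost psi [:: chain_node C]), [:: chain_node C]; split=> //; apply: det_tree_chain.
have [[G [detG <-]] _] := nat_minP some_tree.
have [n Gn] : exists n, G = [:: n].
  by move: detG => /andP [_ /andP [/eqP]]; case: (G) => // n [] //; exists n.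
move: detG; rewrite Gn => /det_tree_for_single [wfn detn atn covn decn].
have [p pn leC] := adversary_path wfn detn atn (isT : agrees [::]) covn decn.
have le_cost : psi (map fst p.1) <= tree_cost psi [:: n].
  by rewrite /tree_cost /tree_paths /= cats0 (leq_bigmax_seq (F := fun p => psi (map fst p.1))).
rewrite -subn1 leq_subLR add1n (leq_trans leC) // cat0s ltnS.
by rewrite (leq_trans (asked_le_size _)) // -(size_map fst) (leq_trans (psi_size _)).
Qed.
End SpikeTable.

Lemma Gpar_le_irreducible_word T : 0 < Gpar T ->
  exists a, [/\ annihilating T a, irreducible T a & Gpar T <= size a].
Proof.
rewrite /Gpar; case: ifP => // _.
set P := fun k => forall a, annihilating T a -> irreducible T a -> size a <= k.
have [[k Pk] G0|noP] := pselect (exists k, P k); last by rewrite /nat_min; case: pselect.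
have [_ minP] := nat_minP (ex_intro _ k Pk); apply: contrapT => noword.
suff /minP : P (nat_min P).-1 by rewrite -/P; lia.
move=> a annA irrA; rewrite -ltnS prednK //; rewrite ltnNge; apply/negP => le_a.
by apply: noword; exists a.
Qed.

Lemma consistent_wordP (w : seq (nat * bool)) p q : consistent_word w ->
  p \in w -> q \in w -> p.1 = q.1 -> p.2 = q.2.
Proof.
move=> /allP consw pw qw pq; apply/eqP.
by have /allP/(_ q qw) := consw p pw; rewrite pq eqxx.
Qed.

Lemma consistent_word_val (w : seq (nat * bool)) p : consistent_word w ->
  p \in w -> p.2 = ((p.1, true) \in w).
Proof.
case: p => a [] consw pw //=; apply/esym/negbTE/negP => tw.
by have := consistent_wordP consw pw tw erefl.
Qed.

Lemma annihilating_undup T a : annihilating T (undup a) = annihilating T a.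
Proof.
rewrite /annihilating /consistent_word /subrows /row_sat !all_undup.
congr [&& _, nilp _ & _]; first by apply: eq_filter => r; rewrite all_undup.
by apply: eq_all => p; rewrite all_undup.
Qed.

Lemma irreducible_uniq T a : annihilating T a -> irreducible T a -> uniq a.
Proof.
move=> annA irrA; apply: contraT => nuA.
have := irrA (undup a) (undup_subseq a); rewrite ltn_size_undup nuA => /(_ isT).
by rewrite annihilating_undup annA.
Qed.

Lemma annihilating_row_deviates T a r : annihilating T a -> r \in rows T ->
  exists2 p, p \in a & nth false r.1 (index p.1 (cols T)) != p.2.
Proof.
case/and3P=> _ /nilP nilTa _ rT; apply: contrapT => agree_r.
suff : r \in subrows T a by rewrite nilTa.
rewrite mem_filter rT andbT; apply/allP => p pa; apply: contrapT => /negP dev_p.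
by apply: agree_r; exists p.
Qed.

Lemma irreducible_spike T a p : annihilating T a -> irreducible T a -> p \in a ->
  exists2 r, r \in rows T & nth false r.1 (index p.1 (cols T)) != p.2 /\
    (forall q, q \in a -> q.1 != p.1 -> nth false r.1 (index q.1 (cols T)) = q.2).
Proof.
move=> annA irrA pa; have /and3P [atA /nilP nilTa consA] := annA.
pose w := [seq q <- a | q.1 != p.1].
have lt_w : size w < size a.
  rewrite size_filter -[X in _ < X](count_predC (fun q => q.1 != p.1)) -{1}[count _ _]addn0.
  by rewrite ltn_add2l -has_count; apply/hasP; exists p; rewrite /= ?eqxx.
have /negP := irrA w (filter_subseq _ _) lt_w; rewrite /annihilating.
have -> : all (fun q => q.1 \in cols T) w.
  by rewrite all_filter; apply: sub_all atA => q /= ->; rewrite implybT.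
have -> : consistent_word w.
  apply/allP => q; rewrite mem_filter => /andP [_ qa]; apply/allP => q'.
  by rewrite mem_filter => /andP [_ q'a]; apply: (allP (allP consA q qa)).
rewrite andbT; case Ew: (subrows T w) => [//|r rs] _.
have : r \in subrows T w by rewrite Ew mem_head.
rewrite mem_filter => /andP [sat_r rT]; exists r => //; split=> [|q qa qp]; last first.
  by apply/eqP; apply: (allP sat_r); rewrite mem_filter qp.
apply/negP => /eqP agree_p; suff : r \in subrows T a by rewrite nilTa.
rewrite mem_filter rT andbT; apply/allP => q qa; have [qp|qp] := eqVneq q.1 p.1.
  by rewrite qp agree_p (consistent_wordP consA pa qa).
by apply: (allP sat_r); rewrite mem_filter qp.
Qed.

Lemma nth_proj_row D cs u a : size u = size cs -> a \notin D ->
  nth false (proj_row D cs u) (index a [seq c <- cs | c \notin D]) = nth false u (index a cs).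
Proof.
elim: cs u => [|c cs IHcs] [|b u] //= [szu] aD; rewrite /proj_row /=.
have [cD|cD] /= := boolP (c \notin D); first by case: (c == a) => //=; apply: IHcs.
have ca : c != a by apply: contraNneq cD => ->.
by rewrite (negbTE ca); apply: IHcs.
Qed.

Lemma mem_first_rows seen s v :
  (v \in map fst (first_rows seen s)) = (v \in map fst s) && (v \notin seen).
Proof.
elim: s seen => //= r s IHs seen; have [r_seen|r_new] /= := ifP; rewrite inE IHs ?inE.
  by have [->|] := eqVneq v r.1; rewrite ?r_seen ?andbF.
by have [->|] := eqVneq v r.1; rewrite ?r_new.
Qed.

Lemma mem_Iop_rows D T v : ~~ all (fun c => c \in D) (cols T) ->
  (v \in map fst (rows (Iop D T))) = (v \in [seq proj_row D (cols T) r.1 | r <- rows T]).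
Proof. by move=> keep; rewrite /Iop (negbTE keep) /= mem_first_rows andbT -map_comp. Qed.

(* The deviating columns are listed by filtering [iota] so that the label is
   strictly sorted, as [valid_dec] requires. The fallback [:: 0] is never used
   on the rows of the restricted tables below, which all deviate somewhere. *)
Definition deviation_label (C : seq nat) (av : nat -> bool) (v : seq bool) : seq nat :=
  let dev := [seq a <- iota 0 (\max_(c <- C) c).+1 |
               (a \in C) && (nth false v (index a C) != av a)] in
  if nilp dev then [:: 0] else dev.

Lemma deviation_label_valid C av v : valid_dec (deviation_label C av v).
Proof.
rewrite /deviation_label; case: ifPn => // dev0; rewrite /valid_dec dev0 andbT.
by apply: sorted_filter; [apply: ltn_trans | apply: iota_ltn_sorted].
Qed.

Lemma mem_deviation_label C av v a d : a \in C -> nth false v (index a C) != av a ->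
  (d \in deviation_label C av v) = (d \in C) && (nth false v (index d C) != av d).
Proof.
have mem_dev x : x \in C -> x <= \max_(c <- C) c by move=> xC; apply: (leq_bigmax_seq (F := id)).
move=> aC dev_a; rewrite /deviation_label; set dev := filter _ _.
have adev : a \in dev by rewrite mem_filter aC dev_a mem_iota add0n ltnS mem_dev.
case: ifPn => [/nilP dev0|_]; first by move: adev; rewrite dev0.
rewrite mem_filter mem_iota add0n ltnS; case dC: (d \in C) => //=.
by rewrite mem_dev // andbT.
Qed.

Section WordRestriction.
Variables (T : table) (al : seq (nat * bool)).
Hypotheses (wfT : wf_table T) (annT : annihilating T al) (irrT : irreducible T al).
Hypothesis al0 : al != [::].

Let av a := (a, true) \in al.
Let D := [seq c <- cols T | c \notin map fst al].
Let C := [seq c <- cols T | c \notin D].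
Let proj := proj_row D (cols T).
Let nu := deviation_label C av.
Let R := rows (Jop nu (Iop D T)).

Lemma letter_val p : p \in al -> p.2 = av p.1.
Proof. by have /and3P [_ _ consA] := annT; apply: consistent_word_val. Qed.

Lemma mem_restricted_cols a : (a \in C) = (a \in map fst al).
Proof.
have /and3P [/allP atA _ _] := annT; rewrite !mem_filter negb_and negbK.
have [/mapP [p pa ->]|_] /= := boolP (a \in map fst al); first by rewrite (atA p pa).
by rewrite andNb.
Qed.

Lemma uniq_word_attrs : uniq (map fst al).
Proof.
have /and3P [_ _ consA] := annT; rewrite map_inj_in_uniq ?(irreducible_uniq annT irrT) //.
move=> [a1 b1] [a2 b2] pa qa /= eq_a.
by move: (consistent_wordP consA pa qa eq_a) => /= <-; rewrite eq_a.
Qed.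

Lemma restricted_cols_size : size C = size al.
Proof.
have /andP [uT _] := wfT; rewrite -(size_map fst al); apply: perm_size.
by apply: uniq_perm; [apply: filter_uniq | apply: uniq_word_attrs | apply: mem_restricted_cols].
Qed.

Lemma restricted_value u a : u \in rows T -> a \in C ->
  nth false (proj u.1) (index a C) = nth false u.1 (index a (cols T)).
Proof.
have /and5P [_ /allP szT _ _ _] := wfT; move=> uT aC; apply: nth_proj_row.
  exact/eqP/szT.
by move: aC; rewrite mem_filter => /andP [].
Qed.

Lemma restricted_keeps_cols : ~~ all (fun c => c \in D) (cols T).
Proof.
have /and3P [/allP atA _ _] := annT.
have [p pa] : exists p, p \in al by case: (al) al0 => // p ? _; exists p; rewrite mem_head.
by apply/allP => /(_ _ (atA p pa)); rewrite mem_filter (atA p pa) andbT (map_f fst pa).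
Qed.

Lemma restricted_table : Jop nu (Iop D T) = Table C R.
Proof. by rewrite /R /Jop /Iop (negbTE restricted_keeps_cols). Qed.

Lemma mem_restricted_rows r :
  (r \in R) = (r.1 \in [seq proj u.1 | u <- rows T]) && (r.2 == nu r.1).
Proof.
rewrite -(mem_Iop_rows _ restricted_keeps_cols); apply/mapP/andP => [[x xI ->]|[]].
  by rewrite /= eqxx; split=> //; apply: map_f.
by case/mapP=> x xI r1 /eqP r2; exists x => //; case: r r1 r2 => ? ? /= -> ->.
Qed.

Lemma restricted_row_deviates r :
  r \in R -> exists2 a, a \in C & nth false r.1 (index a C) != av a.
Proof.
rewrite mem_restricted_rows => /andP [/mapP [u uT ->] _].
have [p pa dev_p] := annihilating_row_deviates annT uT.
have pC : p.1 \in C by rewrite mem_restricted_cols map_f.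
by exists p.1; rewrite // restricted_value // -letter_val.
Qed.

Lemma restricted_deviation_decides r a :
  r \in R -> a \in C -> nth false r.1 (index a C) != av a -> a \in r.2.
Proof.
rewrite mem_restricted_rows => /andP [_ /eqP ->] aC dev_a.
by rewrite /nu (mem_deviation_label _ aC dev_a) aC dev_a.
Qed.

Lemma restricted_spike_rows j : j \in C -> exists2 r, r \in R &
  (forall b, b \in C -> b != j -> nth false r.1 (index b C) = av b) /\
  (forall d, d \in r.2 -> d = j).
Proof.
rewrite mem_restricted_cols => /mapP [p pa ->].
have [u uT [dev_p agree_u]] := irreducible_spike annT irrT pa.
have pC : p.1 \in C by rewrite mem_restricted_cols map_f.
have agree_off b : b \in C -> b != p.1 -> nth false (proj u.1) (index b C) = av b.
  move=> bC bp; have := bC; rewrite mem_restricted_cols => /mapP [q qa bq].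
  by rewrite bq in bC bp *; rewrite restricted_value // agree_u // letter_val.
exists (proj u.1, nu (proj u.1)).
  by rewrite mem_restricted_rows /= eqxx andbT; apply/mapP; exists u.
split=> // d /=; rewrite /nu (mem_deviation_label _ pC).
  by case/andP=> dC; apply: contraNeq => dp; rewrite agree_off // eqxx.
by rewrite restricted_value // -letter_val.
Qed.

Lemma irreducible_word_table psi : (forall a, size a <= psi a) ->
  exists T1, [/\ in_bracket T T1, psi_a psi T1 <= m_psi psi T & (size al).-1 <= psi_d psi T1].
Proof.
have /andP [uT _] := wfT; move=> psi_size; exists (Table C R); split.
- exists D; split; first by move=> c; rewrite mem_filter => /andP [].
  by exists nu; split; [apply: deviation_label_valid | rewrite restricted_table].
- apply: leq_trans (psi_a_spike_le restricted_row_deviates restricted_deviation_decides psi) _.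
  apply/bigmax_leqP_seq => a aC _; rewrite /m_psi (leq_bigmax_seq (F := fun f => psi [:: f])) //.
  by move: aC; rewrite mem_filter => /andP [].
- rewrite -restricted_cols_size.
  exact: (psi_d_spike_ge restricted_row_deviates restricted_deviation_decides
                         (filter_uniq _ uT) restricted_spike_rows).
Qed.
End WordRestriction.

Theorem lemma14 (A : table -> Prop) (psi : seq nat -> nat) :
  closed_class A -> nontrivial A -> bounded_measure psi ->
  (exists n, G_undef psi A n) ->
  exists n, H_undef psi A n.
Proof.
move=> [wfA closedA] _ [_ psi_size] [n Gn]; exists n; apply/infinite_natP => K.
have [_ [[T [AT [mT <-]]] KG]] := (infinite_natP _).1 Gn K.+2.
have [al [annT irrT Gal]] := Gpar_le_irreducible_word (leq_trans (ltn0Sn K.+1) KG).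
have al0 : al != [::] by rewrite -size_eq0 -lt0n (leq_trans _ Gal) // (leq_trans _ KG).
have [T1 [brT1 aT1 dT1]] := irreducible_word_table (wfA T AT) annT irrT al0 psi_size.
exists (psi_d psi T1); split; last by lia.
by exists T1; split; [apply/closedA; exists T | split=> //; apply: leq_trans aT1 mT].
Qed.
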